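(* Let $S$ be a semigroup and $a\in S$ an idempotent with $aSa\subseteq\operatorname{Reg}(S)$; put $P=\{x\in Sa: x\,\mathscr L\,ax\}$ (a regular subsemigroup of $Sa$) and $\phi:P\to aSa$, $x\mapsto ax$. Let $x\in P$, and let $r$ be the number of $\mathscr R^P$-classes contained in $\widehat R^a_x$. Then: (i) the restriction of $\phi$ to $H^P_x$ is a bijection $H^P_x\to H^{aSa}_{ax}$; (ii) $H^P_x$ is a group if and only if $H^{aSa}_{ax}$ is a group, in which case these groups are isomorphic; (iii) if $H^P_x$ is a group, then $\widehat H^a_x$ is a left group of degree $r$ over $H^P_x$; (iv) if $H^P_x$ is a group, then the set of idempotents of $\widehat H^a_x$ is a left zero band of size $r$.
   Context: $\operatorname{Reg}(S)$ is the set of regular elements of $S$. Green's relations $\mathscr K\in\{\mathscr L,\mathscr R,\mathscr H,\mathscr D,\mathscr J\}$ are taken in $S$, in $P$ (written $\mathscr K^P$, classes $K^P_x$) or in the monoid $aSa$ (written $\mathscr K^{aSa}$, classes $K^{aSa}_y$). For each $\mathscr K$, define the relation $\widehat{\mathscr K}^a$ on $P$ by $x\,\widehat{\mathscr K}^a\,y$ iff $(ax,ay)\in\mathscr K^{aSa}$; $\widehat K^a_x$ denotes the $\widehat{\mathscr K}^a$-class of $x$ in $P$. A left zero band is a semigroup $U$ with $uv=u$ for all $u,v\in U$; a left group of degree $r$ over a group $G$ is a semigroup isomorphic to $U\times G$ with $U$ a left zero band of cardinality $r$. *)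

Section Semigroups.
Context {T : Type} (mul : T -> T -> T).

Definition regular (x : T) : Prop := exists y, x = mul (mul x y) x.

Definition inSa (a x : T) : Prop := exists s, x = mul s a.
Definition inaSa (a x : T) : Prop := exists s, x = mul (mul a s) a.

(* Green's relations computed inside a subset A (used for A a subsemigroup):
   x K^A y requires x, y in A, and uses A^1 (adjoined identity). *)
Definition GL (A : T -> Prop) (x y : T) : Prop :=
  A x /\ A y /\
  (x = y \/ exists s, A s /\ x = mul s y) /\
  (y = x \/ exists s, A s /\ y = mul s x).
Definition GR (A : T -> Prop) (x y : T) : Prop :=
  A x /\ A y /\
  (x = y \/ exists s, A s /\ x = mul y s) /\
  (y = x \/ exists s, A s /\ y = mul x s).
Definition GH (A : T -> Prop) (x y : T) : Prop := GL A x y /\ GR A x y.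

Definition fullS : T -> Prop := fun _ => True.

Definition Pset (a : T) (x : T) : Prop := inSa a x /\ GL fullS x (mul a x).

Definition hatR (a x y : T) : Prop :=
  Pset a x /\ Pset a y /\ GR (inaSa a) (mul a x) (mul a y).
Definition hatH (a x y : T) : Prop :=
  Pset a x /\ Pset a y /\ GH (inaSa a) (mul a x) (mul a y).

Definition is_group (H : T -> Prop) : Prop :=
  (forall u v, H u -> H v -> H (mul u v)) /\
  exists e, H e /\ (forall u, H u -> mul e u = u /\ mul u e = u) /\
    (forall u, H u -> exists v, H v /\ mul u v = e /\ mul v u = e).

Definition isomorphic (H1 H2 : T -> Prop) : Prop :=
  exists f : T -> T,
    (forall u, H1 u -> H2 (f u)) /\
    (forall u v, H1 u -> H1 v -> f u = f v -> u = v) /\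
    (forall w, H2 w -> exists u, H1 u /\ f u = w) /\
    (forall u v, H1 u -> H1 v -> f (mul u v) = mul (f u) (f v)).

(* U indexes exactly the R^P-classes contained in hatR^a_x :
   g u is a representative of one such class, and every such class
   has exactly one representative. Thus |U| = r (also for infinite r). *)
Definition class_in_hatR (a x y : T) : Prop :=
  Pset a y /\ forall z, GR (Pset a) y z -> hatR a x z.
Definition indexes_R_classes (a x : T) (U : Type) (g : U -> T) : Prop :=
  (forall u, class_in_hatR a x (g u)) /\
  (forall u v, GR (Pset a) (g u) (g v) -> u = v) /\
  (forall y, class_in_hatR a x y -> exists u, GR (Pset a) (g u) y).

(* hatH^a_x is a left group of degree r over the group G := H^P_x :
   it is isomorphic to U x G with U a left zero band, |U| = r, where
   (u, g)(v, h) = (u, g h). *)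
Definition left_group_of_degree_r (a x : T) (Hhat G : T -> Prop) : Prop :=
  exists (U : Type) (g : U -> T), indexes_R_classes a x U g /\
  exists f : U -> T -> T,
    (forall u h, G h -> Hhat (f u h)) /\
    (forall u v h k, G h -> G k -> f u h = f v k -> u = v /\ h = k) /\
    (forall w, Hhat w -> exists u h, G h /\ f u h = w) /\
    (forall u v h k, G h -> G k -> mul (f u h) (f v k) = f u (mul h k)).

Definition idem_left_zero_band_size_r (a x : T) (Hhat : T -> Prop) : Prop :=
  let E := fun e => Hhat e /\ mul e e = e in
  (forall e f, E e -> E f -> mul e f = e) /\
  exists (U : Type) (g : U -> T), indexes_R_classes a x U g /\
  exists k : U -> T,
    (forall u, E (k u)) /\ (forall u v, k u = k v -> u = v) /\
    (forall e, E e -> exists u, k u = e).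

End Semigroups.

(* P and aSa are regular subsemigroups, and in a regular subsemigroup Green's
   relations are the restrictions of those of S.  Since x L ax for x in P and
   phi(xy) = phi(x) phi(y), phi preserves L and R and is injective on the
   part of P lying in xS; this gives (i), and (ii) follows by transporting
   the group structure along phi.  When H^P_x is a group with identity e0,
   every R^P-class inside hatR^a_x contains exactly one idempotent of
   hatH^a_x, all these idempotents are L-related (hence a left zero band),
   and (e, h) |-> eh maps E(hatH^a_x) x H^P_x isomorphically onto hatH^a_x. *)

From Stdlib Require Import ProofIrrelevance Setoid.

Section Semigroup.
Context {T : Type} (mul : T -> T -> T).
Hypothesis assoc : forall x y z, mul x (mul y z) = mul (mul x y) z.
Local Infix "·" := mul (at level 40, left associativity).

(* Green's L and R of S without adjoining an identity; on regular elements,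
   the only ones they are applied to, this makes no difference. *)
Definition Lequiv (x y : T) : Prop := (exists s, x = s · y) /\ (exists s, y = s · x).
Definition Requiv (x y : T) : Prop := (exists s, x = y · s) /\ (exists s, y = x · s).

Lemma Lequiv_sym x y : Lequiv x y -> Lequiv y x.
Proof. intros [H1 H2]; split; assumption. Qed.

Lemma Requiv_sym x y : Requiv x y -> Requiv y x.
Proof. intros [H1 H2]; split; assumption. Qed.

Lemma Lequiv_trans x y z : Lequiv x y -> Lequiv y z -> Lequiv x z.
Proof.
  intros [[s1 H1] [s2 H2]] [[s3 H3] [s4 H4]]; split.
  - exists (s1 · s3). rewrite H1, H3, assoc. reflexivity.
  - exists (s4 · s2). rewrite H4, H2, assoc. reflexivity.
Qed.

Lemma Requiv_trans x y z : Requiv x y -> Requiv y z -> Requiv x z.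
Proof.
  intros [[s1 H1] [s2 H2]] [[s3 H3] [s4 H4]]; split.
  - exists (s3 · s1). rewrite H1, H3, assoc. reflexivity.
  - exists (s2 · s4). rewrite H4, H2, assoc. reflexivity.
Qed.

Lemma idem_Lequiv_mulr e u : e · e = e -> Lequiv u e -> u · e = u.
Proof. intros He [[s ->] _]. rewrite <- assoc, He. reflexivity. Qed.

Lemma idem_Requiv_mull e u : e · e = e -> Requiv u e -> e · u = u.
Proof. intros He [[s ->] _]. rewrite assoc, He. reflexivity. Qed.

Lemma idem_eq e f : e · e = e -> f · f = f -> Lequiv e f -> Requiv e f -> e = f.
Proof.
  intros He Hf HL HR.
  rewrite <- (idem_Lequiv_mulr f e Hf HL).
  exact (idem_Requiv_mull e f He (Requiv_sym e f HR)).
Qed.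

Definition regular_subsemigroup (B : T -> Prop) : Prop :=
  (forall x y, B x -> B y -> B (x · y)) /\
  (forall x, B x -> exists x', B x' /\ x = x · x' · x).

Section RegularSubsemigroup.
Variable B : T -> Prop.
Hypothesis HB : regular_subsemigroup B.

Lemma ldiv_in_B x y : B x -> B y -> (exists s, x = s · y) -> exists s, B s /\ x = s · y.
Proof.
  intros Bx By [s Hs]. destruct HB as [Bmul Breg].
  destruct (Breg y By) as [y' [By' Hy]].
  exists (x · y'). split; [apply Bmul; assumption|].
  rewrite Hs at 2. rewrite <- !assoc, (assoc y y' y), <- Hy. exact Hs.
Qed.

Lemma rdiv_in_B x y : B x -> B y -> (exists s, x = y · s) -> exists s, B s /\ x = y · s.
Proof.
  intros Bx By [s Hs]. destruct HB as [Bmul Breg].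
  destruct (Breg y By) as [y' [By' Hy]].
  exists (y' · x). split; [apply Bmul; assumption|].
  rewrite Hs at 2. rewrite !assoc, <- Hy. exact Hs.
Qed.

Lemma ldiv_of_B x y : B y -> (x = y \/ exists s, B s /\ x = s · y) -> exists s, x = s · y.
Proof.
  intros By [->|[s [_ Hs]]]; [|exists s; exact Hs].
  destruct (proj2 HB y By) as [y' [_ Hy]]. exists (y · y'). exact Hy.
Qed.

Lemma rdiv_of_B x y : B y -> (x = y \/ exists s, B s /\ x = y · s) -> exists s, x = y · s.
Proof.
  intros By [->|[s [_ Hs]]]; [|exists s; exact Hs].
  destruct (proj2 HB y By) as [y' [_ Hy]]. exists (y' · y). rewrite assoc. exact Hy.
Qed.

Lemma GL_iff x y : GL mul B x y <-> B x /\ B y /\ Lequiv x y.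
Proof.
  split.
  - intros [Bx [By [Hxy Hyx]]].
    repeat split; auto using ldiv_of_B.
  - intros [Bx [By [Hxy Hyx]]].
    repeat split; auto using ldiv_in_B.
Qed.

Lemma GR_iff x y : GR mul B x y <-> B x /\ B y /\ Requiv x y.
Proof.
  split.
  - intros [Bx [By [Hxy Hyx]]].
    repeat split; auto using rdiv_of_B.
  - intros [Bx [By [Hxy Hyx]]].
    repeat split; auto using rdiv_in_B.
Qed.

Lemma GH_iff x y : GH mul B x y <-> B x /\ B y /\ Lequiv x y /\ Requiv x y.
Proof. unfold GH. rewrite GL_iff, GR_iff. tauto. Qed.

End RegularSubsemigroup.

(* f need only be injective on a set D containing H1 and its products; this
   is what makes the converse direction of (ii) work. *)
Section Transport.
Variables (H1 H2 D : T -> Prop) (f : T -> T).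
Hypothesis f_maps : forall u, H1 u -> H2 (f u).
Hypothesis f_onto : forall w, H2 w -> exists u, H1 u /\ f u = w.
Hypothesis H1_sub : forall u, H1 u -> D u.
Hypothesis D_mul : forall u v, H1 u -> H1 v -> D (u · v).
Hypothesis f_inj : forall u v, D u -> D v -> f u = f v -> u = v.
Hypothesis f_mul : forall u v, H1 u -> H1 v -> f (u · v) = f u · f v.
Hypothesis f_reflect : forall u, D u -> H2 (f u) -> H1 u.

Lemma isomorphic_transport : isomorphic mul H1 H2.
Proof. exists f. repeat split; auto. Qed.

Lemma is_group_transport : is_group mul H1 -> is_group mul H2.
Proof.
  intros [H1mul [e [He [Hid Hinv]]]]. split.
  - intros w1 w2 Hw1 Hw2.
    destruct (f_onto w1 Hw1) as [u [Hu <-]]. destruct (f_onto w2 Hw2) as [v [Hv <-]].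
    rewrite <- f_mul by assumption. apply f_maps, H1mul; assumption.
  - exists (f e). split; [apply f_maps; exact He | split].
    + intros w Hw. destruct (f_onto w Hw) as [u [Hu <-]].
      rewrite <- !f_mul, (proj1 (Hid u Hu)), (proj2 (Hid u Hu)) by assumption.
      split; reflexivity.
    + intros w Hw. destruct (f_onto w Hw) as [u [Hu <-]].
      destruct (Hinv u Hu) as [v [Hv [E1 E2]]].
      exists (f v). rewrite <- !f_mul, E1, E2 by assumption.
      split; [apply f_maps; exact Hv | split; reflexivity].
Qed.

Lemma is_group_reflect : is_group mul H2 -> is_group mul H1.
Proof.
  intros [H2mul [e' [He' [Hid Hinv]]]].
  assert (H1mul : forall u v, H1 u -> H1 v -> H1 (u · v)).
  { intros u v Hu Hv. apply f_reflect; auto. rewrite f_mul by assumption. auto. }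
  split; [exact H1mul|].
  destruct (f_onto e' He') as [e [He <-]].
  exists e. split; [exact He|split].
  - intros u Hu. destruct (Hid (f u) (f_maps u Hu)) as [E1 E2].
    rewrite <- !f_mul in E1, E2 by assumption. auto.
  - intros u Hu. destruct (Hinv (f u) (f_maps u Hu)) as [w [Hw [E1 E2]]].
    destruct (f_onto w Hw) as [v [Hv <-]].
    rewrite <- !f_mul in E1, E2 by assumption. exists v. auto.
Qed.

End Transport.

Section LocalMonoid.
Variable a : T.
Hypothesis idem_a : a · a = a.
Hypothesis aSa_reg : forall y, inaSa mul a y -> regular mul y.

Local Notation P := (Pset mul a).
Local Notation A := (inaSa mul a).

Lemma mul_a_a x : x · a · a = x · a.
Proof. rewrite <- assoc, idem_a. reflexivity. Qed.

Ltac simpl_a := repeat rewrite assoc; repeat rewrite mul_a_a; repeat rewrite idem_a.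

Lemma Pset_mul_a x : P x -> x · a = x.
Proof. intros [[s ->] _]. apply mul_a_a. Qed.

Lemma inaSa_mul_a w : A w -> w · a = w.
Proof. intros [s ->]. apply mul_a_a. Qed.

Lemma inaSa_a_mul w : A w -> a · w = w.
Proof. intros [s ->]. simpl_a. reflexivity. Qed.

Lemma Pset_phi_ldiv x : P x -> exists t, x = t · (a · x).
Proof.
  intros [_ [_ [_ [[H|[t [_ H]]] _]]]].
  - exists a. rewrite assoc, idem_a. exact H.
  - exists t. exact H.
Qed.

Lemma Pset_Lequiv_phi x : P x -> Lequiv x (a · x).
Proof. intros Hx. split; [exact (Pset_phi_ldiv x Hx) | exists a; reflexivity]. Qed.

Lemma Pset_Lequiv_refl x : P x -> Lequiv x x.
Proof.
  intros Hx. pose proof (Pset_Lequiv_phi x Hx) as Lx.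
  exact (Lequiv_trans _ _ _ Lx (Lequiv_sym _ _ Lx)).
Qed.

Lemma Pset_Requiv_refl x : P x -> Requiv x x.
Proof. intros Hx. split; exists a; symmetry; apply Pset_mul_a; exact Hx. Qed.

Lemma phi_inaSa x : P x -> A (a · x).
Proof. intros Hx. exists x. rewrite <- assoc, Pset_mul_a by exact Hx. reflexivity. Qed.

Lemma inaSa_Pset w : A w -> P w.
Proof.
  intros Hw. split.
  - destruct Hw as [s Hs]. exists (a · s). exact Hs.
  - repeat split; [left; symmetry; apply inaSa_a_mul; exact Hw|].
    right. exists a. split; [exact I | reflexivity].
Qed.

Lemma Pset_mulr x r : P x -> P (x · (r · a)).
Proof.
  intros Hx. destruct (Pset_phi_ldiv x Hx) as [t Ht]. split.
  - exists (x · r). rewrite assoc. reflexivity.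
  - repeat split; right.
    + exists t. split; [exact I|]. rewrite Ht at 1. simpl_a. reflexivity.
    + exists a. split; [exact I | reflexivity].
Qed.

Lemma Pset_mul x y : P x -> P y -> P (x · y).
Proof. intros Hx [[s ->] _]. apply Pset_mulr. exact Hx. Qed.

Lemma Pset_regular : regular_subsemigroup P.
Proof.
  split; [exact Pset_mul|].
  intros x Hx. destruct (aSa_reg (a · x) (phi_inaSa x Hx)) as [z Hz].
  destruct (Pset_phi_ldiv x Hx) as [t Ht].
  exists (a · z · a). split; [apply inaSa_Pset; exists z; reflexivity|].
  rewrite Ht at 1. rewrite Hz. simpl_a.
  rewrite <- (assoc t a x), <- Ht, (Pset_mul_a x Hx). reflexivity.
Qed.

Lemma inaSa_regular : regular_subsemigroup A.
Proof.
  split.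
  - intros u v [s ->] [t ->]. exists (s · a · a · t). simpl_a. reflexivity.
  - intros w Hw. destruct (aSa_reg w Hw) as [z Hz].
    exists (a · z · a). split; [exists z; reflexivity|].
    rewrite Hz at 1. simpl_a. rewrite (inaSa_mul_a w Hw).
    rewrite <- (assoc (w · z) a w), (inaSa_a_mul w Hw). reflexivity.
Qed.

Lemma phi_mul x y : P x -> a · (x · y) = a · x · (a · y).
Proof. intros Hx. rewrite <- (Pset_mul_a x Hx) at 1. simpl_a. reflexivity. Qed.

Lemma phi_Lequiv x y : P x -> P y -> Lequiv (a · x) (a · y) <-> Lequiv x y.
Proof.
  intros Hx Hy. pose proof (Pset_Lequiv_phi x Hx) as Lx. pose proof (Pset_Lequiv_phi y Hy) as Ly.
  split; intros H.
  - exact (Lequiv_trans _ _ _ Lx (Lequiv_trans _ _ _ H (Lequiv_sym _ _ Ly))).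
  - exact (Lequiv_trans _ _ _ (Lequiv_sym _ _ Lx) (Lequiv_trans _ _ _ H Ly)).
Qed.

Lemma phi_Requiv x y : Requiv x y -> Requiv (a · x) (a · y).
Proof.
  intros [[s Hs] [t Ht]]. split.
  - exists s. rewrite Hs, assoc. reflexivity.
  - exists t. rewrite Ht, assoc. reflexivity.
Qed.

(* x = t(ax) lets one undo left multiplication by a. *)
Lemma phi_cancel y r1 r2 : P y -> a · (y · r1) = a · (y · r2) -> y · r1 = y · r2.
Proof.
  intros Hy H. destruct (Pset_phi_ldiv y Hy) as [t Ht].
  assert (E : forall r, y · r = t · (a · (y · r))).
  { intro r. rewrite Ht at 1. simpl_a. reflexivity. }
  rewrite (E r1), (E r2), H. reflexivity.
Qed.

Lemma GH_Pset_iff x y : GH mul P x y <-> P x /\ P y /\ Lequiv x y /\ Requiv x y.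
Proof. exact (GH_iff P Pset_regular x y). Qed.

Lemma GH_inaSa_iff u w : GH mul A u w <-> A u /\ A w /\ Lequiv u w /\ Requiv u w.
Proof. exact (GH_iff A inaSa_regular u w). Qed.

Lemma hatH_iff x y :
  hatH mul a x y <-> P x /\ P y /\ Lequiv x y /\ Requiv (a · x) (a · y).
Proof.
  unfold hatH. rewrite GH_inaSa_iff. split.
  - intros (Hx & Hy & _ & _ & HL & HR). rewrite <- phi_Lequiv by assumption. tauto.
  - intros (Hx & Hy & HL & HR). rewrite <- phi_Lequiv in HL by assumption.
    auto 6 using phi_inaSa.
Qed.

Section HClass.
Variable x : T.
Hypothesis Px : P x.

Local Notation HP := (GH mul P x).
Local Notation HA := (GH mul A (a · x)).
Local Notation Rideal := (fun w => P w /\ exists r, w = x · r).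

Lemma HP_refl : HP x.
Proof.
  apply GH_Pset_iff.
  auto using Pset_Lequiv_refl, Pset_Requiv_refl.
Qed.

Lemma HP_Pset y : HP y -> P y.
Proof. rewrite GH_Pset_iff. tauto. Qed.

Lemma HP_Rideal y : HP y -> Rideal y.
Proof.
  rewrite GH_Pset_iff. intros (_ & Py & _ & [_ Hr]). split; [exact Py | exact Hr].
Qed.

Lemma Rideal_mul u v : HP u -> HP v -> Rideal (u · v).
Proof.
  intros Hu Hv. destruct (HP_Rideal u Hu) as [Pu [r ->]]. split.
  - apply Pset_mul; [exact Pu | exact (HP_Pset v Hv)].
  - exists (r · v). rewrite assoc. reflexivity.
Qed.

Lemma phi_inj_Rideal y z : Rideal y -> Rideal z -> a · y = a · z -> y = z.
Proof. intros [_ [r1 ->]] [_ [r2 ->]]. apply phi_cancel. exact Px. Qed.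

Lemma phi_inj_HP y z : HP y -> HP z -> a · y = a · z -> y = z.
Proof. intros Hy Hz. apply phi_inj_Rideal; apply HP_Rideal; assumption. Qed.

Lemma phi_HP y : HP y -> HA (a · y).
Proof.
  rewrite GH_Pset_iff, GH_inaSa_iff. intros (_ & Py & HL & HR).
  split; [|split; [|split]]; auto using phi_inaSa, phi_Requiv.
  apply phi_Lequiv; assumption.
Qed.

Lemma phi_reflect_HP w : Rideal w -> HA (a · w) -> HP w.
Proof.
  intros [Pw [r Hr]]. rewrite GH_inaSa_iff, GH_Pset_iff.
  intros (_ & _ & HL & [[q Hq] _]).
  split; [exact Px | split; [exact Pw | split]].
  - apply phi_Lequiv; assumption.
  - split; [exists q | exists r; exact Hr].
    destruct (Pset_phi_ldiv x Px) as [t Ht].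
    rewrite Ht at 1. rewrite Hq, Hr. simpl_a.
    rewrite <- (assoc t a x), <- Ht. reflexivity.
Qed.

Lemma phi_onto_HP w : HA w -> exists y, HP y /\ a · y = w.
Proof.
  intros Hw. pose proof Hw as Hw'. rewrite GH_inaSa_iff in Hw'.
  destruct Hw' as (_ & Aw & _ & [_ [u Hu]]).
  assert (Hay : a · (x · (u · a)) = w).
  { simpl_a. rewrite <- Hu. apply inaSa_mul_a. exact Aw. }
  exists (x · (u · a)). split; [|exact Hay].
  apply phi_reflect_HP; [split; [apply Pset_mulr; exact Px | exists (u · a); reflexivity]|].
  rewrite Hay. exact Hw.
Qed.

Lemma phi_mul_HP u v : HP u -> HP v -> a · (u · v) = a · u · (a · v).
Proof. intros Hu _. apply phi_mul. exact (HP_Pset u Hu). Qed.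

Lemma HP_isomorphic_HA : isomorphic mul HP HA.
Proof.
  apply isomorphic_transport with (f := mul a) (D := Rideal);
    auto using phi_HP, phi_onto_HP, HP_Rideal, phi_inj_Rideal, phi_mul_HP.
Qed.

Lemma is_group_HP_iff : is_group mul HP <-> is_group mul HA.
Proof.
  split.
  - apply is_group_transport with (f := mul a); auto using phi_HP, phi_onto_HP, phi_mul_HP.
  - apply is_group_reflect with (f := mul a) (D := Rideal);
      auto using phi_HP, phi_onto_HP, HP_Rideal, Rideal_mul, phi_inj_Rideal, phi_mul_HP,
        phi_reflect_HP.
Qed.

Section LeftGroup.
Variable e0 : T.
Hypothesis He0 : HP e0.
Hypothesis Hid : forall u, HP u -> e0 · u = u /\ u · e0 = u.
Hypothesis Hinv : forall u, HP u -> exists v, HP v /\ u · v = e0 /\ v · u = e0.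

Local Notation Hhat := (hatH mul a x).
Local Notation E := (fun e => hatH mul a x e /\ e · e = e).

Lemma HP_hatH y : HP y -> Hhat y.
Proof.
  rewrite GH_Pset_iff, hatH_iff. intros (_ & Py & HL & HR).
  auto using phi_Requiv.
Qed.

Lemma E_e0 : E e0.
Proof. split; [exact (HP_hatH e0 He0) | exact (proj1 (Hid e0 He0))]. Qed.

Lemma hatH_Lequiv y z : Hhat y -> Hhat z -> Lequiv y z.
Proof.
  rewrite !hatH_iff. intros (_ & _ & Hy & _) (_ & _ & Hz & _).
  exact (Lequiv_trans _ _ _ (Lequiv_sym _ _ Hy) Hz).
Qed.

Lemma hatH_mul_idem y e : Hhat y -> E e -> y · e = y.
Proof. intros Hy [He Hee]. exact (idem_Lequiv_mulr e y Hee (hatH_Lequiv y e Hy He)). Qed.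

Lemma hatH_idem_eq e f : E e -> E f -> Requiv e f -> e = f.
Proof.
  intros [He Hee] [Hf Hff]. apply idem_eq; [exact Hee | exact Hff |].
  exact (hatH_Lequiv e f He Hf).
Qed.

Lemma hatH_phi_eq w y : Hhat w -> P y -> a · y = a · w -> Hhat y.
Proof.
  rewrite !hatH_iff. intros (_ & Pw & HL & HR) Py Hyw.
  split; [exact Px | split; [exact Py | split]].
  - apply Lequiv_trans with w; [exact HL|].
    apply Lequiv_trans with (a · w); [exact (Pset_Lequiv_phi w Pw)|].
    rewrite <- Hyw. exact (Lequiv_sym _ _ (Pset_Lequiv_phi y Py)).
  - rewrite Hyw. exact HR.
Qed.

Lemma idem_mul_Requiv e h : E e -> HP h -> Requiv e (e · h).
Proof.
  intros He Hh. destruct (Hinv h Hh) as [h' [_ [hh' _]]]. split.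
  - exists h'. rewrite <- assoc, hh'. symmetry. exact (hatH_mul_idem e e0 (proj1 He) E_e0).
  - exists h. reflexivity.
Qed.

Lemma idem_mul_hatH e h : E e -> HP h -> Hhat (e · h).
Proof.
  intros He Hh. pose proof Hh as Hh'. rewrite GH_Pset_iff in Hh'.
  destruct Hh' as (_ & Ph & HLh & _).
  pose proof (proj1 He) as He'. rewrite hatH_iff in He'. destruct He' as (_ & Pe & _ & HRe).
  rewrite hatH_iff. split; [exact Px | split; [apply Pset_mul; assumption | split]].
  - apply Lequiv_trans with h; [exact HLh|]. split; [exists e0 | exists e; reflexivity].
    rewrite assoc, (hatH_mul_idem e0 e (proj1 E_e0) He). symmetry. exact (proj1 (Hid h Hh)).
  - apply Requiv_trans with (a · e); [exact HRe|].
    apply phi_Requiv, idem_mul_Requiv; assumption.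
Qed.

Lemma idem_mul_inj e1 e2 h k :
  E e1 -> E e2 -> HP h -> HP k -> e1 · h = e2 · k -> e1 = e2 /\ h = k.
Proof.
  intros He1 He2 Hh Hk Heq.
  assert (e1 = e2) as <-.
  { apply hatH_idem_eq; [exact He1 | exact He2 |].
    apply Requiv_trans with (e1 · h); [apply idem_mul_Requiv; assumption|].
    rewrite Heq. apply Requiv_sym, idem_mul_Requiv; assumption. }
  split; [reflexivity|].
  rewrite <- (proj1 (Hid h Hh)), <- (proj1 (Hid k Hk)).
  rewrite <- (hatH_mul_idem e0 e1 (proj1 E_e0) He1), <- !assoc, Heq. reflexivity.
Qed.

(* With ax = ay q and ay = ax q', z = yqa satisfies az = ax and z R y; then
   zx^-1 is the required idempotent, since x^-1 z = e0 by cancellation. *)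
Lemma idem_in_Rclass y : P y -> Requiv (a · x) (a · y) -> exists e, E e /\ Requiv e y.
Proof.
  intros Py [[q Hq] [q' Hq']].
  set (z := y · (q · a)).
  assert (Pz : P z) by (apply Pset_mulr; exact Py).
  assert (az : a · z = a · x).
  { unfold z. simpl_a. rewrite <- Hq, <- (assoc a x a), (Pset_mul_a x Px). reflexivity. }
  assert (Hz : Hhat z) by exact (hatH_phi_eq x z (HP_hatH x HP_refl) Pz az).
  assert (zy : Requiv z y).
  { split; [exists (q · a); reflexivity | exists q'].
    unfold z. rewrite <- (Pset_mul_a y Py) at 1. rewrite <- assoc.
    apply phi_cancel; [exact Py|].
    rewrite (Pset_mul_a y Py). simpl_a.
    rewrite <- Hq, <- (assoc a x a), (Pset_mul_a x Px). exact Hq'. }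
  destruct (Hinv x HP_refl) as [h0 [Hh0 [xh0 h0x]]].
  assert (h0z : h0 · z = e0).
  { rewrite <- h0x. apply phi_cancel; [exact (HP_Pset h0 Hh0)|].
    rewrite !(phi_mul h0) by exact (HP_Pset h0 Hh0). rewrite az. reflexivity. }
  assert (ze0 : z · e0 = z) by exact (hatH_mul_idem z e0 Hz E_e0).
  exists (z · h0). split; [split|].
  - apply (hatH_phi_eq e0); [exact (HP_hatH e0 He0) | apply Pset_mul; [exact Pz | exact (HP_Pset h0 Hh0)]|].
    rewrite (phi_mul z) by exact Pz. rewrite az, <- (phi_mul x) by exact Px.
    rewrite xh0. reflexivity.
  - rewrite <- (assoc z h0 (z · h0)), (assoc h0 z h0), h0z, (proj1 (Hid h0 Hh0)).
    reflexivity.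
  - apply Requiv_trans with z; [|exact zy].
    split; [exists h0; reflexivity | exists x].
    rewrite <- assoc, h0x, ze0. reflexivity.
Qed.

Lemma hatH_decomp w : Hhat w -> exists e h, E e /\ HP h /\ e · h = w.
Proof.
  intros Hw. pose proof Hw as Hw'. rewrite hatH_iff in Hw'.
  destruct Hw' as (_ & Pw & HLw & HRw).
  destruct (idem_in_Rclass w Pw HRw) as [e [He HRe]].
  assert (ew : e · w = w) by exact (idem_Requiv_mull e w (proj2 He) (Requiv_sym e w HRe)).
  assert (ee0 : e · e0 = e) by exact (hatH_mul_idem e e0 (proj1 He) E_e0).
  exists e, (e0 · w). split; [exact He | split; [|rewrite assoc, ee0; exact ew]].
  pose proof He0 as He0'. rewrite GH_Pset_iff in He0'. destruct He0' as (_ & Pe0 & _ & HRe0).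
  apply GH_Pset_iff. split; [exact Px | split; [apply Pset_mul; assumption | split]].
  - apply Lequiv_trans with w; [exact HLw|].
    split; [exists e | exists e0; reflexivity].
    rewrite assoc, ee0. symmetry. exact ew.
  - apply Requiv_trans with e0; [exact HRe0|].
    split; [|exists w; reflexivity].
    destruct HRe as [[s Hs] _]. exists s.
    rewrite <- assoc, <- Hs. symmetry. exact (hatH_mul_idem e0 e (proj1 E_e0) He).
Qed.

Lemma idem_hatR_index : indexes_R_classes mul a x {e | E e} (@proj1_sig _ _).
Proof.
  split; [|split].
  - intros [e He]. simpl. pose proof (proj1 He) as He'. rewrite hatH_iff in He'.
    destruct He' as (_ & Pe & _ & HRe).
    split; [exact Pe|]. intros z Hz. rewrite (GR_iff P Pset_regular) in Hz.
    destruct Hz as (_ & Pz & Hez).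
    split; [exact Px | split; [exact Pz|]]. apply (GR_iff A inaSa_regular).
    split; [apply phi_inaSa; exact Px | split; [apply phi_inaSa; exact Pz|]].
    apply Requiv_trans with (a · e); [exact HRe | apply phi_Requiv; exact Hez].
  - intros [e1 He1] [e2 He2] HR. simpl in HR.
    rewrite (GR_iff P Pset_regular) in HR. destruct HR as (_ & _ & HR).
    assert (e1 = e2) as <- by exact (hatH_idem_eq e1 e2 He1 He2 HR).
    f_equal. apply proof_irrelevance.
  - intros y [Py Hc].
    assert (Hy : hatR mul a x y).
    { apply Hc, (GR_iff P Pset_regular). auto using Pset_Requiv_refl. }
    destruct Hy as (_ & _ & HR). rewrite (GR_iff A inaSa_regular) in HR.
    destruct HR as (_ & _ & HR).
    destruct (idem_in_Rclass y Py HR) as [e [He HRe]].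
    exists (exist _ e He). simpl. apply (GR_iff P Pset_regular).
    split; [|auto]. exact (proj1 (proj2 (proj1 (hatH_iff x e) (proj1 He)))).
Qed.

Lemma hatH_left_group : left_group_of_degree_r mul a x Hhat HP.
Proof.
  exists {e | E e}, (@proj1_sig _ _). split; [exact idem_hatR_index|].
  exists (fun u h => proj1_sig u · h). split; [|split; [|split]].
  - intros [e He] h Hh. simpl. apply idem_mul_hatH; assumption.
  - intros [e1 He1] [e2 He2] h k Hh Hk Heq. simpl in Heq.
    destruct (idem_mul_inj e1 e2 h k He1 He2 Hh Hk Heq) as [<- <-].
    split; [f_equal; apply proof_irrelevance | reflexivity].
  - intros w Hw. destruct (hatH_decomp w Hw) as [e [h [He [Hh <-]]]].
    exists (exist _ e He), h. split; [exact Hh | reflexivity].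
  - intros [e1 He1] [e2 He2] h k Hh Hk. simpl.
    rewrite (assoc (e1 · h) e2 k), <- (assoc e1 h e2).
    rewrite (hatH_mul_idem h e2 (HP_hatH h Hh) He2), assoc. reflexivity.
Qed.

Lemma hatH_idem_left_zero_band : idem_left_zero_band_size_r mul a x Hhat.
Proof.
  split.
  - intros e f He Hf. exact (idem_Lequiv_mulr f e (proj2 Hf) (hatH_Lequiv e f (proj1 He) (proj1 Hf))).
  - exists {e | E e}, (@proj1_sig _ _). split; [exact idem_hatR_index|].
    exists (@proj1_sig _ _). split; [|split].
    + intros [e He]. exact He.
    + intros [e1 He1] [e2 He2]. simpl. intros <-. f_equal. apply proof_irrelevance.
    + intros e He. exists (exist _ e He). reflexivity.
Qed.

End LeftGroup.
End HClass.
End LocalMonoid.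
End Semigroup.

Theorem theorem3p21 (T : Type) (mul : T -> T -> T)
  (assoc : forall x y z, mul x (mul y z) = mul (mul x y) z)
  (a : T) (idem_a : mul a a = a)
  (aSa_reg : forall y, inaSa mul a y -> regular mul y)
  (x : T) (Px : Pset mul a x) :
  let P := Pset mul a in
  let HPx := fun y => GH mul P x y in
  let HaSa := fun z => GH mul (inaSa mul a) (mul a x) z in
  let Hhat := fun y => hatH mul a x y in
  ((forall y, HPx y -> HaSa (mul a y)) /\
   (forall y z, HPx y -> HPx z -> mul a y = mul a z -> y = z) /\
   (forall w, HaSa w -> exists y, HPx y /\ mul a y = w)) /\
  ((is_group mul HPx <-> is_group mul HaSa) /\
   (is_group mul HPx -> isomorphic mul HPx HaSa)) /\
  (is_group mul HPx -> left_group_of_degree_r mul a x Hhat HPx) /\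
  (is_group mul HPx -> idem_left_zero_band_size_r mul a x Hhat).
Proof.
  cbv zeta.
  split; [split; [|split] | split; [split | split]].
  - intros y. eapply phi_HP; eassumption.
  - intros y z. eapply phi_inj_HP; eassumption.
  - intros w. eapply phi_onto_HP; eassumption.
  - eapply is_group_HP_iff; eassumption.
  - intros _. eapply HP_isomorphic_HA; eassumption.
  - intros [_ [e0 [He0 [Hid Hinv]]]]. eapply hatH_left_group; eassumption.
  - intros [_ [e0 [He0 [Hid Hinv]]]]. eapply hatH_idem_left_zero_band; eassumption.
Qed.
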